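(* Let $R$ be a commutative ring with unit, let $b\in R$, and let $\mathbf B=\begin{pmatrix}1&1&-1\\0&b&0\\0&0&b\end{pmatrix}$. (1) $\mathbf B$ is partition regular over $R$ if and only if $\mathrm{ann}(b)=\{x\in R: xb=0\}$ is infinite. (2) $\mathbf B$ satisfies the generalised columns condition over $R$ if and only if there exists $d\in R$ with $db=0$ and $d^nR$ infinite for all $n\ge0$.
   Context: $\mathbf{B}$ is partition regular over $R$ if for every $r\ge1$ and every map $\chi\colon R\to\{1,\dots,r\}$ there is a nonzero $\mathbf{x}=(x_1,x_2,x_3)^{\intercal}\in R^3$ with $\mathbf{B}\mathbf{x}=0$ and $\chi(x_1)=\chi(x_2)=\chi(x_3)$. Generalised columns condition for a $k\times l$ matrix over $R$ with columns $\mathbf c_1,\dots,\mathbf c_l$: there exist $m\ge0$, a partition $\{1,\dots,l\}=I_0\cup\dots\cup I_m$ and $d_0,\dots,d_m\in R\setminus\{0\}$ with (i) $d_0\sum_{i\in I_0}\mathbf c_i=0$; (ii) for $1\le t\le m$, $d_t\sum_{i\in I_t}\mathbf c_i$ lies in the $R$-submodule generated by the $\mathbf c_j$ with $j\in I_0\cup\dots\cup I_{t-1}$; (iii) if $m>0$, the ideal $d_0(d_1\cdots d_m)^nR$ is infinite for every $n\ge0$. *)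

From HB Require Import structures.
From mathcomp Require Import all_boot all_order all_algebra.
From mathcomp Require Import boolp classical_sets cardinality.
Set Implicit Arguments. Unset Strict Implicit. Unset Printing Implicit Defensive.
Import GRing.Theory.
Local Open Scope ring_scope.
Local Open Scope classical_set_scope.

(* R : comPzRingType = commutative ring with 1 (the zero ring is allowed). *)

Definition partition_regular (R : comPzRingType) (k l : nat) (A : 'M[R]_(k, l)) : Prop :=
  forall (r : nat), (0 < r)%N -> forall chi : R -> 'I_r,
    exists x : 'cV[R]_l, x != 0 /\ A *m x = 0 /\
      (forall i j : 'I_l, chi (x i 0) = chi (x j 0)).

(* The partition {1..l} = I_0 u ... u I_m is
   given by a surjective map f : 'I_l -> 'I_(m.+1) (I_t = f^-1 t, nonempty);
   the constants are d : 'I_(m.+1) -> R, all nonzero. *)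
Definition gen_columns_condition (R : comPzRingType) (k l : nat) (A : 'M[R]_(k, l)) : Prop :=
  exists (m : nat) (f : 'I_l -> 'I_(m.+1)) (d : 'I_(m.+1) -> R),
    (forall t : 'I_(m.+1), exists i : 'I_l, f i = t) /\
    (forall t : 'I_(m.+1), d t != 0) /\
    d ord0 *: (\sum_(i < l | f i == ord0) col i A) = 0 /\
    (forall t : 'I_(m.+1), (0 < t)%N ->
       exists a : 'I_l -> R,
         d t *: (\sum_(i < l | f i == t) col i A)
           = \sum_(j < l | (f j < t)%N) a j *: col j A) /\
    ((0 < m)%N -> forall n : nat,
       infinite_set (range (fun y : R =>
         d ord0 * (\prod_(t < m.+1 | (0 < t)%N) d t) ^+ n * y))).

Definition Bmat (R : comPzRingType) (b : R) : 'M[R]_3 :=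
  \matrix_(i < 3, j < 3)
    match nat_of_ord i, nat_of_ord j with
    | 0, 0 => 1
    | 0, 1 => 1
    | 0, _ => -1
    | 1, 1 => b
    | 2, 2 => b
    | _, _ => 0
    end.

From HB Require Import structures.
From mathcomp Require Import all_boot all_order all_algebra.
From mathcomp Require Import boolp classical_sets cardinality.
From mathcomp Require Import zify ring.
Set Implicit Arguments. Unset Strict Implicit. Unset Printing Implicit Defensive.
Import GRing.Theory.
Local Open Scope ring_scope.
Local Open Scope classical_set_scope.

(* Every solution of [Bmat b *m x = 0] has its entries in ann(b), and
   [(u - w, w - v, u - v)] is a solution for all u, v, w in ann(b).  If ann(b)
   is finite, a colouring that is injective on it admits no nonzero
   monochromatic solution.  If it is infinite, Ramsey's theorem for triangles,
   applied to the colouring (u, w) |-> chi(u - w) of ordered pairs, gives a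
   monochromatic solution with w <> v.
   For the columns condition: the block I_t containing the second or third
   column, or failing that the singleton block of the first column, satisfies
   t > 0 and d_t b = 0, and d_t^n divides the element of condition (iii).
   Conversely, I_0 = {2, 3}, I_1 = {1} with all constants equal to d works. *)

Section MonochromaticTriangle.
Variables (T : Type) (r : nat) (c : T -> T -> 'I_r).

Definition coloured_in (C : {set 'I_r}) (Y : set T) :=
  forall u w, Y u -> Y w -> u <> w -> c u w \in C.

Definition monochromatic_triangle (Y : set T) :=
  exists v w u, [/\ Y v, Y w & Y u] /\ [/\ w <> v, u <> w & u <> v] /\
    c w v = c u w /\ c u v = c w v.

Lemma monochromatic_triangle_sub (Y Z : set T) :
  Y `<=` Z -> monochromatic_triangle Y -> monochromatic_triangle Z.
Proof.
move=> YZ [v [w [u [[Yv Yw Yu] H]]]].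
by exists v, w, u; split; first by split; apply: YZ.
Qed.

Lemma infinite_set_fibre (Y : set T) (g : T -> 'I_r) :
  infinite_set Y -> exists k, infinite_set (Y `&` [set u | g u = k]).
Proof.
move=> infY; apply: contrapT => /forallNP fin_fibres; apply: infY.
apply: (@sub_finite_set _ _ (\bigcup_(k in [set: 'I_r]) (Y `&` [set u | g u = k]))).
  by move=> u Yu; exists (g u).
apply: bigcup_finite; first exact: finite_finset.
by move=> k _; apply: contrapT; apply: fin_fibres.
Qed.

Lemma infinite_colour_class (C : {set 'I_r}) (Y : set T) :
  infinite_set Y -> coloured_in C Y ->
  exists v k, [/\ Y v, k \in C & infinite_set ((Y `\ v) `&` [set u | c u v = k])].
Proof.
move=> infY YC; have [v Yv] := infinite_setN0 infY.
have infYv : infinite_set (Y `\ v) by apply: infinite_setD => //; exact: finite_set1.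
have [k infX] := infinite_set_fibre (c^~ v) infYv.
have [u [[Yu /= uv] /= cuv]] := infinite_setN0 infX.
by exists v, k; split => //; rewrite -cuv; apply: YC.
Qed.

Lemma coloured_in_monochromatic_triangle n (C : {set 'I_r}) (Y : set T) :
  (#|C| <= n)%N -> infinite_set Y -> coloured_in C Y -> monochromatic_triangle Y.
Proof.
elim: n C Y => [|n IH] C Y leCn infY YC;
  have [v [k [Yv kC infX]]] := infinite_colour_class infY YC.
  by move: leCn; rewrite leqn0 => /eqP/cards0_eq C0; rewrite C0 inE in kC.
pose X := (Y `\ v) `&` [set u | c u v = k].
(* Either a pair of colour k in X closes a triangle with v, or colour k is
   absent from X and we recurse on X with one colour fewer. *)
have [[w [u [[[Yw /= wv] cwv] [[Yu /= uv] cuv] uw cuw]]]|] :=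
  pselect (exists w u, [/\ X w, X u, u <> w & c u w = k]).
  by exists v, w, u; split => //; rewrite cwv cuv cuw.
move=> /forallNP noX; apply: (@monochromatic_triangle_sub X) => [u [[]] //|].
apply: (IH (C :\ k) X) => //.
  by move: leCn; rewrite (cardsD1 k C) kC add1n ltnS.
move=> u w Xu Xw uw; have [[Yu _] _] := Xu; have [[Yw _] _] := Xw.
rewrite !inE YC // andbT.
by apply/eqP => cuw; apply: (noX w); exists u.
Qed.

Lemma infinite_monochromatic_triangle (Y : set T) :
  infinite_set Y -> monochromatic_triangle Y.
Proof.
move=> infY; apply: (@coloured_in_monochromatic_triangle r [set: 'I_r]) => //.
  by rewrite cardsT card_ord.
by move=> *; rewrite inE.
Qed.

End MonochromaticTriangle.

Lemma sum_scale_col_coord (R : pzRingType) m n (A : 'M[R]_(m, n))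
    (P : pred 'I_n) (a : 'I_n -> R) k :
  (\sum_(j | P j) a j *: col j A) k 0 = \sum_(j | P j) a j * A k j.
Proof. by rewrite summxE; apply: eq_bigr => j _; rewrite !mxE. Qed.

Definition i0 : 'I_3 := @Ordinal 3 0 isT.
Definition i1 : 'I_3 := @Ordinal 3 1 isT.
Definition i2 : 'I_3 := @Ordinal 3 2 isT.

Lemma ord3_ind (P : 'I_3 -> Prop) : P i0 -> P i1 -> P i2 -> forall i, P i.
Proof.
by move=> P0 P1 P2 [[|[|[|//]]] lti]; rewrite (bool_irrelevance lti isT).
Qed.

Lemma big_ord3 (V : nmodType) (F : 'I_3 -> V) : \sum_(j < 3) F j = F i0 + F i1 + F i2.
Proof.
rewrite !big_ord_recl big_ord0 addr0 addrA.
by congr (F _ + F _ + F _); apply: val_inj.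
Qed.

Lemma cV3_ext (R : Type) (x y : 'cV[R]_3) :
  x i0 0 = y i0 0 -> x i1 0 = y i1 0 -> x i2 0 = y i2 0 -> x = y.
Proof.
move=> e0 e1 e2; apply/matrixP => i j; rewrite (ord1 j).
by move: i; apply: ord3_ind.
Qed.

Definition col3 (R : zmodType) (p q s : R) : 'cV[R]_3 := \col_i [:: p; q; s]`_i.

Lemma col3E (R : zmodType) (p q s : R) :
  [/\ col3 p q s i0 0 = p, col3 p q s i1 0 = q & col3 p q s i2 0 = s].
Proof. by rewrite !mxE. Qed.

Lemma index_inord_inj (T : eqType) (s : seq T) :
  {in s &, injective (fun y => inord (index y s) : 'I_(size s).+1)}.
Proof.
move=> y z ys zs /(congr1 val) /=; rewrite !inordK ?ltnS ?index_size // => e.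
by rewrite -(nth_index y ys) -(nth_index y zs) e.
Qed.

Lemma infinite_ideal_factor (R : comPzRingType) (c e : R) :
  infinite_set (range (fun y => c * e * y)) -> infinite_set (range (fun y => c * y)).
Proof.
apply: contra_not; apply: sub_finite_set => _ [y _ <-].
by exists (e * y); rewrite ?mulrA.
Qed.

Lemma infinite_ideal_neq0 (R : comPzRingType) (c : R) :
  infinite_set (range (fun y => c * y)) -> c != 0.
Proof.
move=> inf; apply/eqP => c0; apply: inf; rewrite c0.
apply: (sub_finite_set _ (finite_set1 0)).
by move=> _ [y _ <-]; rewrite mul0r.
Qed.

Section Bmat.
Variables (R : comPzRingType) (b : R).

Lemma Bmat_row0 (P : pred 'I_3) (a : 'I_3 -> R) :
  \sum_(j | P j) a j * Bmat b i0 j =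
  (if P i0 then a i0 else 0) + (if P i1 then a i1 else 0) - (if P i2 then a i2 else 0).
Proof.
rewrite big_mkcond big_ord3 !mxE /=.
by case: (P i0); case: (P i1); case: (P i2); ring.
Qed.

Lemma Bmat_row1 (P : pred 'I_3) (a : 'I_3 -> R) :
  \sum_(j | P j) a j * Bmat b i1 j = if P i1 then a i1 * b else 0.
Proof.
rewrite big_mkcond big_ord3 !mxE /=.
by case: (P i0); case: (P i1); case: (P i2); ring.
Qed.

Lemma Bmat_row2 (P : pred 'I_3) (a : 'I_3 -> R) :
  \sum_(j | P j) a j * Bmat b i2 j = if P i2 then a i2 * b else 0.
Proof.
rewrite big_mkcond big_ord3 !mxE /=.
by case: (P i0); case: (P i1); case: (P i2); ring.
Qed.

Lemma mulBmat_coord (x : 'cV[R]_3) k : (Bmat b *m x) k 0 = \sum_j x j 0 * Bmat b k j.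
Proof. by rewrite mxE; apply: eq_bigr => j _; rewrite mulrC. Qed.

Lemma mulBmat_eq0 (x : 'cV[R]_3) :
  Bmat b *m x = 0 <->
  [/\ x i0 0 + x i1 0 - x i2 0 = 0, x i1 0 * b = 0 & x i2 0 * b = 0].
Proof.
split=> [Bx0 | [h0 h1 h2]].
  have coord k := congr1 (fun M : 'cV_3 => M k 0) Bx0.
  move: (coord i0) (coord i1) (coord i2).
  by rewrite /= !mulBmat_coord Bmat_row0 Bmat_row1 Bmat_row2 !mxE.
by apply: cV3_ext; rewrite mulBmat_coord ?Bmat_row0 ?Bmat_row1 ?Bmat_row2 mxE.
Qed.

Lemma Bmat_kernel_ann (x : 'cV[R]_3) : Bmat b *m x = 0 -> forall i, x i 0 * b = 0.
Proof.
move=> /mulBmat_eq0[h0 h1 h2]; apply: ord3_ind => //.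
have -> : x i0 0 = x i2 0 - x i1 0 by rewrite -[LHS]subr0 -h0; ring.
by rewrite mulrBl h1 h2 subr0.
Qed.

Lemma Bmat_kernel_const (x : 'cV[R]_3) :
  Bmat b *m x = 0 -> (forall i j, x i 0 = x j 0) -> x = 0.
Proof.
move=> /mulBmat_eq0[h0 _ _] xc.
have x1 : x i1 0 = 0 by rewrite -h0 (xc i0 i1) (xc i2 i1); ring.
by apply: cV3_ext; rewrite mxE ?(xc _ i1).
Qed.

Lemma partition_regular_Bmat_infinite_ann : partition_regular (Bmat b) ->
  infinite_set [set x : R | x * b = 0].
Proof.
move=> PR /finite_seqP[s ann_s].
have in_s y : y * b = 0 -> y \in s.
  by move=> yb; have : [set x : R | x * b = 0] y by []; rewrite ann_s.
have [x [x_neq0 [Bx0 mono]]] := PR (size s).+1 isT (fun y => inord (index y s)).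
move/eqP: x_neq0; apply; apply: (Bmat_kernel_const Bx0) => i j.
by apply: index_inord_inj (mono i j); apply: in_s; apply: Bmat_kernel_ann Bx0 _.
Qed.

Lemma infinite_ann_partition_regular_Bmat : infinite_set [set x : R | x * b = 0] ->
  partition_regular (Bmat b).
Proof.
move=> inf r _ chi.
have [v [w [u [[Av Aw Au] [[wv _ _] [c1 c2]]]]]] :=
  infinite_monochromatic_triangle (fun u w => chi (u - w)) inf.
have [x0 x1 x2] := col3E (u - w) (w - v) (u - v).
exists (col3 (u - w) (w - v) (u - v)); split; [|split].
- apply/eqP => /(congr1 (fun x : 'cV_3 => x i1 0)).
  by rewrite x1 mxE => /eqP; rewrite subr_eq0 => /eqP.
- by apply/mulBmat_eq0; rewrite x0 x1 x2 !mulrBl Au Aw Av; split; ring.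
- have mono : forall i, chi (col3 (u - w) (w - v) (u - v) i 0) = chi (w - v).
    by apply: ord3_ind; rewrite ?x0 ?x1 ?x2 ?c2 ?c1.
  by move=> i j; rewrite !mono.
Qed.

Lemma Bmat_columns_block_ann m (f : 'I_3 -> 'I_m.+1) (d : 'I_m.+1 -> R) :
  d ord0 != 0 ->
  d ord0 *: (\sum_(i < 3 | f i == ord0) col i (Bmat b)) = 0 ->
  (forall t : 'I_m.+1, (0 < t)%N -> exists a : 'I_3 -> R,
     d t *: (\sum_(i < 3 | f i == t) col i (Bmat b))
       = \sum_(j < 3 | (f j < t)%N) a j *: col j (Bmat b)) ->
  exists2 t : 'I_m.+1, (0 < t)%N & d t * b = 0.
Proof.
move=> d0_neq0 block0 block.
have block_row (t : 'I_m.+1) : (0 < t)%N -> exists a : 'I_3 -> R, forall k,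
    \sum_(j | f j == t) d t * Bmat b k j = \sum_(j | (f j < t)%N) a j * Bmat b k j.
  move=> t_gt0; have [a ha] := block t t_gt0; exists a => k.
  by rewrite -!sum_scale_col_coord -scaler_sumr ha.
have pos (t : 'I_m.+1) : t != ord0 -> (0 < t)%N by rewrite lt0n.
have [f1|/pos f1_gt0] := eqVneq (f i1) ord0; last first.
  have [a /(_ i1)] := block_row _ f1_gt0; rewrite !Bmat_row1 eqxx ltnn => db0.
  by exists (f i1).
have [f2|/pos f2_gt0] := eqVneq (f i2) ord0; last first.
  have [a /(_ i2)] := block_row _ f2_gt0; rewrite !Bmat_row2 eqxx ltnn => db0.
  by exists (f i2).
have [f0|/pos f0_gt0] := eqVneq (f i0) ord0.
  have := congr1 (fun M : 'cV_3 => M i0 0) block0.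
  rewrite /= scaler_sumr sum_scale_col_coord Bmat_row0 f0 f1 f2 eqxx mxE.
  by move=> d0; case/eqP: d0_neq0; rewrite -d0; ring.
have f0_neq : (ord0 == f i0) = false by apply: negbTE; rewrite eq_sym -lt0n.
exists (f i0) => //.
have [a row] := block_row _ f0_gt0.
move: (row i0) (row i1) (row i2).
rewrite !Bmat_row0 !Bmat_row1 !Bmat_row2.
rewrite f1 f2 eqxx ltnn f0_neq /= f0_gt0 addr0 subr0 add0r => -> a1b a2b.
by rewrite mulrBl -a1b -a2b subr0.
Qed.

Lemma gen_columns_condition_Bmat_ann : gen_columns_condition (Bmat b) ->
  exists d : R, d * b = 0 /\ forall n, infinite_set (range (fun y => d ^+ n * y)).
Proof.
move=> [m [f [d [_ [d_neq0 [block0 [block inf]]]]]]].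
have [t t_gt0 dtb] := Bmat_columns_block_ann (d_neq0 ord0) block0 block.
have m_gt0 : (0 < m)%N by have := ltn_ord t; lia.
exists (d t); split => // n.
pose e := d ord0 * (\prod_(j < m.+1 | (0 < j)%N && (j != t)) d j) ^+ n.
apply: (@infinite_ideal_factor _ _ e).
have -> : (fun y => d t ^+ n * e * y)
    = (fun y => d ord0 * (\prod_(j < m.+1 | (0 < j)%N) d j) ^+ n * y).
  by apply: funext => y; rewrite /e [in RHS](bigD1 t) //= exprMn; ring.
exact: inf.
Qed.

Lemma ann_gen_columns_condition_Bmat (d : R) : d * b = 0 ->
  (forall n, infinite_set (range (fun y => d ^+ n * y))) -> gen_columns_condition (Bmat b).
Proof.
move=> db0 inf.
have d_neq0 : d != 0 by apply: infinite_ideal_neq0; have := inf 1%N; rewrite expr1.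
pose f (i : 'I_3) : 'I_2 := if i == i0 then ord_max else ord0.
have [f0 f1 f2] : [/\ f i0 = ord_max, f i1 = ord0 & f i2 = ord0] by rewrite /f.
exists 1%N, f, (fun _ => d); split; [|split; [|split; [|split]]].
- by move=> [[|[|//]] lt2]; [exists i1 | exists i0]; apply: val_inj.
- by [].
- by apply: cV3_ext; rewrite scaler_sumr sum_scale_col_coord ?Bmat_row0 ?Bmat_row1 ?Bmat_row2
    ?f0 ?f1 ?f2 mxE /= ?add0r ?subrr.
- move=> t t_gt0; have -> : t = ord_max by apply: val_inj => /=; have := ltn_ord t; lia.
  exists (fun j => if j == i1 then d else 0).
  by apply: cV3_ext; rewrite scaler_sumr !sum_scale_col_coord ?Bmat_row0 ?Bmat_row1 ?Bmat_row2
    ?f0 ?f1 ?f2 /= ?addr0 ?add0r ?subr0 ?mul0r.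
- move=> _ n; rewrite big_mkcond !big_ord_recl big_ord0 /= mul1r mulr1 -exprS.
  exact: inf.
Qed.
End Bmat.

Theorem lemma4p2 (R : comPzRingType) (b : R) :
  (partition_regular (Bmat b) <-> infinite_set [set x : R | x * b = 0]) /\
  (gen_columns_condition (Bmat b) <->
     exists d : R, d * b = 0 /\
       forall n : nat, infinite_set (range (fun y : R => d ^+ n * y))).
Proof.
split; split.
- exact: partition_regular_Bmat_infinite_ann.
- exact: infinite_ann_partition_regular_Bmat.
- exact: gen_columns_condition_Bmat_ann.
- by move=> [d [db0 inf]]; exact: ann_gen_columns_condition_Bmat db0 inf.
Qed.
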